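(* Let $m$ be an element of the monoid $M$. Then there exists a representative $w_0\in\Sigma^*$ of $m$ in which every pair of consecutive letters is of one of the forms: $c_ic_j$ with $i\ge j-1$; $c_it_{j\,j+1}$ with $i\ge j-1$; $t_{i\,i+1}c_j$ with $i\ge j-2$; or $t_{i\,i+1}t_{j\,j+1}$ with $i\ge j-2$. Furthermore: (i) this representative $w_0$ is unique, and it is the lexicographically maximal representative of $m$ with respect to the total order $c_1<t_{12}<c_2<t_{23}<c_3<\cdots$ on $\Sigma$; (ii) if $w_0$ starts with $c_1$ or $t_{12}$, then every representative $w\in\Sigma^*$ of $m$ starts with $c_1$ or $t_{12}$; (iii) if $w_0$ contains no factor of the form $c_ic_i$ ($i\ge1$), then no representative $w\in\Sigma^*$ of $m$ contains a factor of this form.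
   Context: Let $\Sigma=\{c_1,c_2,\dots\}\cup\{t_{12},t_{23},\dots,t_{i\,i+1},\dots\}$ be a countable alphabet, $\Sigma^*$ the free monoid on $\Sigma$, and $M$ the free partially commutative monoid obtained from $\Sigma^*$ by imposing the commutation relations $c_ic_j=c_jc_i$ if $|i-j|\ge2$; $c_it_{j\,j+1}=t_{j\,j+1}c_i$ if $i\le j-2$ or $i\ge j+3$; $t_{i\,i+1}t_{j\,j+1}=t_{j\,j+1}t_{i\,i+1}$ if $|i-j|\ge3$. A representative of $m\in M$ is a word in $\Sigma^*$ whose image in $M$ is $m$ (all representatives have the same length). A factor of a word is a block of consecutive letters. *)

From Stdlib Require Import Relations List.
From mathcomp Require Import all_boot.
Set Implicit Arguments. Unset Strict Implicit. Unset Printing Implicit Defensive.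

(* Letters: [c i] is c_i and [t i] is t_{i,i+1}; the alphabet Sigma consists
   of the letters with index i >= 1 (see [valid_letter]). *)
Inductive letter : Type := c of nat | t of nat.

Definition index (a : letter) : nat := match a with c i => i | t i => i end.
Definition valid_letter (a : letter) : Prop := 1 <= index a.
Definition valid_word (w : seq letter) : Prop := forall a, List.In a w -> valid_letter a.

Definition commute (a b : letter) : Prop :=
  match a, b with
  | c i, c j => i + 2 <= j \/ j + 2 <= i
  | c i, t j => i + 2 <= j \/ j + 3 <= i
  | t j, c i => i + 2 <= j \/ j + 3 <= i
  | t i, t j => i + 3 <= j \/ j + 3 <= i
  end.

Definition swap_step (u v : seq letter) : Prop :=
  exists p q a b, commute a b /\ u = p ++ a :: b :: q /\ v = p ++ b :: a :: q.

Definition equivM : relation (seq letter) := clos_refl_trans _ swap_step.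

(* Allowed consecutive pairs of letters (indices in Z: i >= j-1 etc.). *)
Definition good_pair (a b : letter) : Prop :=
  match a, b with
  | c i, c j => j <= i + 1
  | c i, t j => j <= i + 1
  | t i, c j => j <= i + 2
  | t i, t j => j <= i + 2
  end.

Definition good_word (w : seq letter) : Prop :=
  forall p q a b, w = p ++ a :: b :: q -> good_pair a b.

(* Total order c_1 < t_12 < c_2 < t_23 < ... via ranks. *)
Definition rank (a : letter) : nat := match a with c i => 2 * i | t i => 2 * i + 1 end.

Fixpoint lex_le (u v : seq letter) : Prop :=
  match u, v with
  | [::], _ => True
  | _ :: _, [::] => False
  | a :: u', b :: v' => rank a < rank b \/ (a = b /\ lex_le u' v')
  end.

Definition starts_c1_t12 (w : seq letter) : Prop :=
  match w with c 1 :: _ | t 1 :: _ => True | _ => False end.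

Definition has_cc_factor (w : seq letter) : Prop :=
  exists p q i, w = p ++ c i :: c i :: q.

From Pilot Require Import Defs.
From Stdlib Require Import Relations List Classical.
From HB Require Import structures.
From mathcomp Require Import all_boot zify.
Set Implicit Arguments. Unset Strict Implicit. Unset Printing Implicit Defensive.

(* Two representatives of the same element of M have the same projection onto
   every pair {x, y} of non-commuting letters.  If two good words have equal
   projections, their first letters agree: otherwise every letter in front of
   the first occurrence of one head in the other word commutes with it, and
   goodness then forces an impossible rank pattern.  So good representatives
   are unique.  Swapping an adjacent commuting pair into rank-decreasing order
   decreases the number of commuting rank-increasing pairs and increases the
   word lexicographically, and a word admitting no such swap is good: every
   representative rewrites to the good one, which yields lexicographic
   maximality and (ii).  For (iii), a factor c_i c_i can be moved across a
   letter as a block, so it survives the rewriting. *)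

(* [commute] itself is shadowed by ssrfun's. *)
Local Notation comm := Defs.commute.

Definition letter_code (a : letter) : nat + nat :=
  match a with c i => inl i | t i => inr i end.
Definition letter_decode (s : nat + nat) : letter :=
  match s with inl i => c i | inr i => t i end.
Lemma letter_codeK : cancel letter_code letter_decode. Proof. by case. Qed.
HB.instance Definition _ := Equality.copy letter (can_type letter_codeK).

Definition commb (a b : letter) : bool :=
  match a, b with
  | c i, c j => (i + 2 <= j) || (j + 2 <= i)
  | c i, t j | t j, c i => (i + 2 <= j) || (j + 3 <= i)
  | t i, t j => (i + 3 <= j) || (j + 3 <= i)
  end.

Lemma commbP a b : reflect (comm a b) (commb a b).
Proof. by case: a => i; case: b => j /=; apply: (iffP idP); lia. Qed.

Lemma commute_sym a b : comm a b -> comm b a.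
Proof. by case: a => i; case: b => j /=; lia. Qed.

Lemma commute_irrefl a : ~ comm a a.
Proof. by case: a => i /=; lia. Qed.

Lemma rank_inj : injective rank.
Proof. by case=> i [] j /= E; f_equal; lia. Qed.

Lemma good_commute_rank a b : good_pair a b -> comm a b -> rank b < rank a.
Proof. by case: a => i; case: b => j /=; lia. Qed.

Lemma not_good_pair a b : ~ good_pair a b -> comm a b /\ rank a < rank b.
Proof. by case: a => i; case: b => j /=; lia. Qed.

Lemma commute_rank_between y z a :
  comm y a -> comm z a -> rank y < rank a < rank z -> comm y z.
Proof. by case: y => i; case: z => j; case: a => k /=; lia. Qed.

Lemma good_word_behead a u : good_word (a :: u) -> good_word u.
Proof. by move=> G p q x y E; apply: (G (a :: p) q); rewrite E. Qed.

Lemma good_commute_chain y l a r :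
  good_word (y :: l ++ a :: r) -> {in y :: l, forall z, comm z a} ->
  rank a < rank y.
Proof.
elim: l y => [|z l IH] y G C.
  exact: good_commute_rank (G [::] r y a erefl) (C y (mem_head _ _)).
have gyz := G [::] (l ++ a :: r) y z erefl.
have lt_az : rank a < rank z.
  by apply: IH (good_word_behead G) _ => x x_l; apply: C; rewrite inE x_l orbT.
have cya := C y (mem_head _ _).
have cza : comm z a by apply: C; rewrite !inE eqxx orbT.
case: (ltngtP (rank y) (rank a)) => [lt_ya|//|/rank_inj eq_ya].
- have := good_commute_rank gyz (commute_rank_between cya cza _); lia.
- by move: cya; rewrite eq_ya => /commute_irrefl.
Qed.

Definition proj (x y : letter) (w : seq letter) : seq letter := filter (pred2 x y) w.

Definition same_proj (u v : seq letter) : Prop :=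
  forall x y, ~ comm x y -> proj x y u = proj x y v.

Lemma same_proj_swap p q a b :
  comm a b -> same_proj (p ++ a :: b :: q) (p ++ b :: a :: q).
Proof.
move=> cab x y nxy; rewrite /proj !filter_cat /=; congr (_ ++ _).
case ha: ((a == x) || (a == y)); case hb: ((b == x) || (b == y)) => //; exfalso.
by move: ha hb => /orP[]/eqP Ea /orP[]/eqP Eb; subst;
  first [exact: commute_irrefl cab | exact: nxy cab | exact: nxy (commute_sym cab)].
Qed.

Lemma equivM_same_proj u v : equivM u v -> same_proj u v.
Proof.
elim=> {u v} [u v [p [q [a [b [cab [-> ->]]]]]]|//|u v w _ Suv _ Svw x y nxy].
  exact: same_proj_swap.
by rewrite Suv // Svw.
Qed.

Lemma same_proj_cons a u v : same_proj (a :: u) (a :: v) -> same_proj u v.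
Proof. by move=> S x y nxy; have := S x y nxy; rewrite /proj /=; case: ifP => // _ []. Qed.

Lemma split_first (T : eqType) (a : T) v :
  a \in v -> exists v1 v2, v = v1 ++ a :: v2 /\ a \notin v1.
Proof.
elim: v => //= b v IH; rewrite inE.
have [-> _|nab /= a_v] := eqVneq a b; first by exists [::], v.
have [v1 [v2 [-> nin]]] := IH a_v.
by exists (b :: v1), v2; rewrite inE negb_or nab.
Qed.

Lemma filter_pred2_head (T : eqType) (z a : T) l r :
  z \in l -> a \notin l -> exists s, filter (pred2 z a) (l ++ r) = z :: s.
Proof.
elim: l => //= b l IH; rewrite !inE negb_or => /orP[/eqP-> _|z_l /andP[nab a_l]].
  by rewrite eqxx; eexists.
have [<-|_] := eqVneq b z; first by eexists.
by rewrite eq_sym (negbTE nab) /=; apply: IH.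
Qed.

Lemma same_proj_head_rank a b u v :
  same_proj (a :: u) (b :: v) -> good_word (b :: v) -> rank a <= rank b.
Proof.
move=> S G; have [-> //|nab] := eqVneq a b.
have a_v : a \in v.
  have := S a a (@commute_irrefl a); rewrite /proj /= eqxx eq_sym (negbTE nab) /=.
  by move/(congr1 (fun s => a \in s)); rewrite mem_head mem_filter => /esym/andP[].
have [v1 [v2 [Ev a_v1]]] := split_first a_v; subst v.
have a_bv1 : a \notin b :: v1 by rewrite inE negb_or nab.
suff C : {in b :: v1, forall z, comm z a} by exact: ltnW (good_commute_chain G C).
move=> z z_bv1; apply/commbP/negPn/negP => /commbP nza.
have [s Es] := filter_pred2_head (a :: v2) z_bv1 a_bv1.
have := S z a nza; rewrite /proj -cat_cons Es /= eqxx orbT => -[E _].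
by move: a_bv1; rewrite E z_bv1.
Qed.

Lemma good_same_proj_eq u v : same_proj u v -> good_word u -> good_word v -> u = v.
Proof.
elim: u v => [|a u IH] [|b v] // S Gu Gv.
- by have := S b b (@commute_irrefl b); rewrite /proj /= eqxx.
- by have := S a a (@commute_irrefl a); rewrite /proj /= eqxx.
have Eab : a = b.
  have S' : same_proj (b :: v) (a :: u) by move=> x y nxy; rewrite S.
  apply: rank_inj; apply/eqP; rewrite eqn_leq.
  by rewrite (same_proj_head_rank S Gv) (same_proj_head_rank S' Gu).
subst b; congr (_ :: _); apply: IH (good_word_behead Gu) (good_word_behead Gv).
exact: same_proj_cons S.
Qed.

Fixpoint inversions (w : seq letter) : nat :=
  if w is a :: r then count (fun b => commb a b && (rank a < rank b)) r + inversions r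
  else 0.

Definition upstep (u v : seq letter) : Prop :=
  exists p q a b,
    [/\ comm a b, rank a < rank b, u = p ++ a :: b :: q & v = p ++ b :: a :: q].

Local Notation upstep_tc := (clos_trans _ upstep).
Local Notation upstep_rtc := (clos_refl_trans _ upstep).

Lemma upstepI p q a b :
  comm a b -> rank a < rank b -> upstep (p ++ a :: b :: q) (p ++ b :: a :: q).
Proof. by exists p, q, a, b. Qed.

Lemma inversions_upstep u v : upstep u v -> inversions v < inversions u.
Proof.
case=> p [q [a [b [cab lt_ab -> ->]]]]; elim: p => [|x p IH] /=.
  have lt_ba : rank b < rank a = false by rewrite ltnNge (ltnW lt_ab).
  by rewrite (introT (commbP a b) cab) lt_ab lt_ba andbF /=; lia.
by rewrite !count_cat /=; lia.
Qed.

Lemma inversions_upstep_tc u v : upstep_tc u v -> inversions v < inversions u.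
Proof.
elim=> {u v} [u v /inversions_upstep //|u v w _ lt_vu _ lt_wv].
exact: ltn_trans lt_wv lt_vu.
Qed.

Lemma upstep_rtc_equivM u v : upstep_rtc u v -> equivM u v.
Proof.
elim=> {u v} [u v [p [q [a [b [cab _ -> ->]]]]]|u|u v w _ uv _ vw].
- by apply: rt_step; exists p, q, a, b.
- exact: rt_refl.
- exact: rt_trans uv vw.
Qed.

Lemma lex_le_refl u : lex_le u u.
Proof. by elim: u => //= a u IH; right. Qed.

Lemma lex_le_trans v u w : lex_le u v -> lex_le v w -> lex_le u w.
Proof.
elim: u v w => [|a u IH] [|b v] [|x w] //= [lt_ab|[<- uv]] [lt_bx|[<- vw]].
- by left; apply: ltn_trans lt_bx.
- by left.
- by left.
- by right; split=> //; apply: IH vw.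
Qed.

Lemma upstep_rtc_lex u v : upstep_rtc u v -> lex_le u v.
Proof.
elim=> {u v} [u v [p [q [a [b [_ lt_ab -> ->]]]]]|u|u v w _ uv _ vw].
- by elim: p => [|x p IH] /=; [left | right].
- exact: lex_le_refl.
- exact: lex_le_trans uv vw.
Qed.

Lemma not_good_upstep w : ~ good_word w -> exists v, upstep w v.
Proof.
move=> nGw; apply: NNPP => no_step; apply: nGw => p q a b Ew.
apply: NNPP => /not_good_pair [cab lt_ab]; apply: no_step.
by exists (p ++ b :: a :: q); rewrite Ew; apply: upstepI.
Qed.

Lemma upstep_normalize (P : seq letter -> Prop) w :
  (forall u, P u -> ~ good_word u -> exists2 v, upstep_tc u v & P v) ->
  P w -> exists v, [/\ upstep_rtc w v, good_word v & P v].
Proof.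
move=> step; move: {2}(inversions w).+1 (ltnSn (inversions w)) => n.
elim: n w => // n IH w lt_wn Pw.
have [Gw|nGw] := classic (good_word w); first by exists w; split=> //; apply: rt_refl.
have [u wu Pu] := step w Pw nGw.
have [v [uv Gv Pv]] := IH u (leq_trans (inversions_upstep_tc wu) lt_wn) Pu.
by exists v; split=> //; exact: rt_trans (@clos_t_clos_rt _ _ _ _ wu) uv.
Qed.

Lemma normal_form w : exists2 v, upstep_rtc w v & good_word v.
Proof.
have [|v [wv Gv _]] := @upstep_normalize (fun _ => True) w _ I; last by exists v.
by move=> u _ /not_good_upstep [v uv]; exists v => //; apply: t_step.
Qed.

Lemma factor2_cases (T : Type) (p q p' q' : seq T) a b x y :
  p ++ a :: b :: q = p' ++ x :: y :: q' ->
  (exists m, p' = p ++ a :: b :: m /\ q = m ++ x :: y :: q') \/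
  (exists m, p = p' ++ x :: y :: m /\ q' = m ++ a :: b :: q) \/
  [/\ p = p', a = x, b = y & q = q'] \/
  [/\ p = p' ++ [:: x], a = y & q' = b :: q] \/
  [/\ p' = p ++ [:: a], x = b & q = y :: q'].
Proof.
elim: p p' => [|z p IH] [|z' p'] /=.
- by case=> -> -> ->; do 2 right; left.
- case=> ->; case: p' => [|z'' p'] /=; first by case=> -> ->; do 4 right.
  by case=> -> ->; left; exists p'.
- case=> <- {IH}; case: p => [|z'' p] /=; first by case=> -> <-; do 3 right; left.
  by case=> -> <-; right; left; exists p.
- case=> -> /IH [[m [-> ->]]|[[m [-> ->]]|[[-> -> -> ->]|[[-> -> ->]|[-> -> ->]]]]].
  + by left; exists m.
  + by right; left; exists m.
  + by do 2 right; left.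
  + by do 3 right; left.
  + by do 4 right.
Qed.

Lemma upstep_tc_pair_left p q x b :
  comm x b -> rank x < rank b ->
  upstep_tc (p ++ x :: x :: b :: q) (p ++ b :: x :: x :: q).
Proof.
move=> cxb lt_xb; have step1 := upstepI (p ++ [:: x]) q cxb lt_xb.
rewrite -!catA /= in step1.
exact: t_trans (t_step _ _ _ _ step1) (t_step _ _ _ _ (upstepI p (x :: q) cxb lt_xb)).
Qed.

Lemma upstep_tc_pair_right p q a x :
  comm a x -> rank a < rank x ->
  upstep_tc (p ++ a :: x :: x :: q) (p ++ x :: x :: a :: q).
Proof.
move=> cax lt_ax; have step2 := upstepI (p ++ [:: x]) q cax lt_ax.
rewrite -!catA /= in step2.
exact: t_trans (t_step _ _ _ _ (upstepI p (x :: q) cax lt_ax)) (t_step _ _ _ _ step2).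
Qed.

(* A step that would split a factor c_i c_i is replaced by two steps moving
   the neighbouring letter across the whole factor. *)
Lemma upstep_has_cc_factor u v :
  upstep u v -> has_cc_factor u -> exists2 v', upstep_tc u v' & has_cc_factor v'.
Proof.
case=> p [q [a [b [cab lt_ab -> _]]]] [p' [q' [i Ecc]]].
case: (factor2_cases Ecc) => [|[|[|[|]]]].
- case=> m [_ ->]; exists (p ++ b :: a :: m ++ c i :: c i :: q').
    by apply: t_step; apply: upstepI.
  by exists (p ++ b :: a :: m), q', i; rewrite -catA.
- case=> m [-> _]; exists ((p' ++ c i :: c i :: m) ++ b :: a :: q).
    by apply: t_step; apply: upstepI.
  by exists p', (m ++ b :: a :: q), i; rewrite -catA.
- by case=> _ Ea Eb _; move: cab; rewrite Ea Eb => /commute_irrefl.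
- case=> -> Ea _; subst a; rewrite -catA /=; exists (p' ++ b :: c i :: c i :: q).
    exact: upstep_tc_pair_left.
  by exists (p' ++ [:: b]), q, i; rewrite -catA.
- case=> _ Eb ->; subst b; exists (p ++ c i :: c i :: a :: q').
    exact: upstep_tc_pair_right.
  by exists p, (a :: q'), i.
Qed.

Lemma equivM_size u v : equivM u v -> size u = size v.
Proof.
elim=> {u v} [u v [p [q [a [b [_ [-> ->]]]]]]|//|u v w _ -> _ -> //].
by rewrite !size_cat.
Qed.

Lemma equivM_valid u v : equivM u v -> valid_word u -> valid_word v.
Proof.
elim=> {u v} [u v [p [q [a [b [_ [-> ->]]]]]]|//|u v w _ uv _ vw /uv /vw //].
by move=> Vu z; rewrite List.in_app_iff /= => z_v; apply: Vu; rewrite List.in_app_iff /=; tauto.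
Qed.

Lemma lex_le_starts_c1_t12 a r b s :
  valid_letter a -> lex_le (a :: r) (b :: s) ->
  starts_c1_t12 (b :: s) -> starts_c1_t12 (a :: r).
Proof.
rewrite /valid_letter => Va [lt_ab|[-> _] //].
by case: b lt_ab => [[|[|j]]|[|[|j]]] //=; case: a Va => [[|[|i]]|[|[|i]]] //=; lia.
Qed.

Lemma upstep_rtc_starts_c1_t12 u v :
  valid_word u -> upstep_rtc u v -> starts_c1_t12 v -> starts_c1_t12 u.
Proof.
move=> Vu uv; have := equivM_size (upstep_rtc_equivM uv).
case: u Vu {uv} (upstep_rtc_lex uv) => [|a r] Vu; case: v => [|b s] // lex _.
exact: lex_le_starts_c1_t12 (Vu a (or_introl erefl)) lex.
Qed.

Theorem theorem3p12 (w : seq letter) (hw : valid_word w) :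
  exists w0 : seq letter,
    equivM w w0 /\ good_word w0 /\
    (forall w', equivM w w' -> good_word w' -> w' = w0) /\
    (forall w', equivM w w' -> lex_le w' w0) /\
    (starts_c1_t12 w0 -> forall w', equivM w w' -> starts_c1_t12 w') /\
    (~ has_cc_factor w0 -> forall w', equivM w w' -> ~ has_cc_factor w').
Proof.
have [w0 w_w0 good_w0] := normal_form w.
have eq_w0 w' : equivM w w' -> good_word w' -> w' = w0.
  move=> ww' good_w'; apply: good_same_proj_eq good_w' good_w0 => x y nxy.
  by rewrite -(equivM_same_proj ww' nxy) (equivM_same_proj (upstep_rtc_equivM w_w0) nxy).
have to_good w' v : equivM w w' -> upstep_rtc w' v -> good_word v -> v = w0.
  by move=> ww' w'v; apply: eq_w0; exact: rt_trans ww' (upstep_rtc_equivM w'v).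
have to_w0 w' : equivM w w' -> upstep_rtc w' w0.
  by move=> ww'; have [v w'v /(to_good w' v ww' w'v) Ev] := normal_form w'; rewrite -Ev.
exists w0; split; first exact: upstep_rtc_equivM.
split; first exact: good_w0.
split; first exact: eq_w0.
split; first by move=> w' /to_w0/upstep_rtc_lex.
split.
- move=> s0 w' ww'; apply: upstep_rtc_starts_c1_t12 (to_w0 w' ww') s0.
  exact: equivM_valid ww' hw.
- move=> no_cc w' ww' cc_w'.
  have [|v [w'v good_v cc_v]] := upstep_normalize _ cc_w'.
    by move=> u cc_u /not_good_upstep [v /upstep_has_cc_factor]; apply.
  by apply: no_cc; rewrite -(to_good w' v ww' w'v good_v).
Qed.
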